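(* Let $(M,\varphi,\xi,\eta,g)$ be a $5$-dimensional almost contact B-metric manifold and let $L$ be a $\varphi$-Kähler-type tensor on $M$. Then $$L=\nu L_1+\nu^* L_2,$$ where, at each point $p\in M$, $\nu=\nu(p)(L)$ and $\nu^*=\nu^*(p)(L)=\nu(p)(L^* )$ are the sectional curvatures with respect to $L$ of the non-degenerate totally real $2$-planes in $T_pM$ orthogonal to $\xi$: namely, for every such $2$-plane $\alpha$ one has $k(\alpha;p)(L)=\nu(p)$ and $k^*(\alpha;p)(L)=\nu^*(p)$. In particular, $M$ has point-wise constant sectional curvatures of the totally real $2$-planes orthogonal to $\xi$ with respect to $L$ (these curvatures depend only on $p$, not on $\alpha$).
   Context: An almost contact B-metric manifold $(M,\varphi,\xi,\eta,g)$ is a $(2n+1)$-dimensional manifold with a $(1,1)$-tensor $\varphi$, a vector field $\xi$, a $1$-form $\eta$ and a pseudo-Riemannian metric $g$ of signature $(n,n+1)$ such that $\varphi\xi=0$, $\varphi^2=-\mathrm{Id}+\eta\otimes\xi$, $\eta\circ\varphi=0$, $\eta(\xi)=1$, and $g(x,y)=-g(\varphi x,\varphi y)+\eta(x)\eta(y)$ for all vector fields $x,y$. A $(0,4)$-tensor $L$ is curvature-like if $L(x,y,z,w)=-L(y,x,z,w)=-L(x,y,w,z)$ and $L(x,y,z,w)+L(y,z,x,w)+L(z,x,y,w)=0$; it is of $\varphi$-Kähler type if additionally $L(x,y,\varphi z,\varphi w)=-L(x,y,z,w)$. The associated tensor is $L^*(x,y,z,w)=L(x,y,z,\varphi w)$.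 Define $\pi_1(x,y,z,w)=g(y,z)g(x,w)-g(x,z)g(y,w)$, $\pi_2(x,y,z,w)=g(y,\varphi z)g(x,\varphi w)-g(x,\varphi z)g(y,\varphi w)$, $\pi_3(x,y,z,w)=-g(y,z)g(x,\varphi w)-g(y,\varphi z)g(x,w)+g(x,z)g(y,\varphi w)+g(x,\varphi z)g(y,w)$, $\pi_4(x,y,z,w)=\eta(y)\eta(z)g(x,w)+\eta(x)\eta(w)g(y,z)-\eta(x)\eta(z)g(y,w)-\eta(y)\eta(w)g(x,z)$, $\pi_5(x,y,z,w)=\eta(y)\eta(z)g(x,\varphi w)+\eta(x)\eta(w)g(y,\varphi z)-\eta(x)\eta(z)g(y,\varphi w)-\eta(y)\eta(w)g(x,\varphi z)$, and $L_1=\pi_1-\pi_2-\pi_4$, $L_2=\pi_3+\pi_5$. A $2$-plane $\alpha\subset T_pM$ is non-degenerate if $g|_\alpha$ is non-degenerate, totally real if $\alpha\perp\varphi\alpha$ (w.r.t. $g$), and orthogonal to $\xi$ if $\alpha\perp\xi$. For such $\alpha$ with any basis $\{x,y\}$, $k(\alpha;p)(L)=\dfrac{L(x,y,y,x)}{\pi_1(x,y,y,x)}$ and $k^*(\alpha;p)(L)=\dfrac{L(x,y,y,\varphi x)}{\pi_1(x,y,y,x)}$. *)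

(* Pointwise (tangent-space) formalization: T_pM = 'cV[R]_5. *)
From HB Require Import structures.
From mathcomp Require Import all_boot all_order all_algebra.
Set Implicit Arguments. Unset Strict Implicit. Unset Printing Implicit Defensive.
Import Order.TTheory GRing.Theory Num.Theory.
Local Open Scope ring_scope.

Section ACB.
Variable R : rcfType.
Local Notation V := 'cV[R]_5.

Definition gf (G : 'M[R]_5) (x y : V) : R := (x^T *m G *m y) 0 0.
Definition etaf (eta : 'rV[R]_5) (x : V) : R := (eta *m x) 0 0.

(* signature (n, n+1) with n = 2: 2 negative and 3 positive directions *)
Definition signature_2_3 (G : 'M[R]_5) : Prop :=
  exists P : 'M[R]_5, P \in unitmx /\
    P^T *m G *m P = diag_mx (\row_(i < 5) (if (i < 3)%N then 1 else -1)).

Definition acBmetric (phi : 'M[R]_5) (xi : V) (eta : 'rV[R]_5) (G : 'M[R]_5)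
  : Prop :=
  [/\ G^T = G, signature_2_3 G,
      phi *m xi = 0 /\
      phi *m phi = - 1%:M + xi *m eta,
      eta *m phi = 0 /\
      etaf eta xi = 1
    & forall x y : V,
        gf G x y = - gf G (phi *m x) (phi *m y) + etaf eta x * etaf eta y].

Definition tensor4 := V -> V -> V -> V -> R.

Definition multilinear4 (L : tensor4) : Prop :=
  [/\ forall (a : R) x x' y z w,
        L (a *: x + x') y z w = a * L x y z w + L x' y z w,
      forall (a : R) x y y' z w,
        L x (a *: y + y') z w = a * L x y z w + L x y' z w,
      forall (a : R) x y z z' w,
        L x y (a *: z + z') w = a * L x y z w + L x y z' w
    & forall (a : R) x y z w w',
        L x y z (a *: w + w') = a * L x y z w + L x y z w'].

Definition curvature_like (L : tensor4) : Prop :=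
  [/\ multilinear4 L,
      forall x y z w, L x y z w = - L y x z w,
      forall x y z w, L x y z w = - L x y w z
    & forall x y z w, L x y z w + L y z x w + L z x y w = 0].

Definition phi_Kaehler_type (phi : 'M[R]_5) (L : tensor4) : Prop :=
  curvature_like L /\
  forall x y z w, L x y (phi *m z) (phi *m w) = - L x y z w.

Definition assoc_tensor (phi : 'M[R]_5) (L : tensor4) : tensor4 :=
  fun x y z w => L x y z (phi *m w).

Section Pis.
Variables (phi : 'M[R]_5) (eta : 'rV[R]_5) (G : 'M[R]_5).
Local Notation g := (gf G).
Local Notation et := (etaf eta).
Local Notation ph x := (phi *m x).

Definition pi1 : tensor4 := fun x y z w => g y z * g x w - g x z * g y w.
Definition pi2 : tensor4 := fun x y z w =>
  g y (ph z) * g x (ph w) - g x (ph z) * g y (ph w).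
Definition pi3 : tensor4 := fun x y z w =>
  - g y z * g x (ph w) - g y (ph z) * g x w
  + g x z * g y (ph w) + g x (ph z) * g y w.
Definition pi4 : tensor4 := fun x y z w =>
  et y * et z * g x w + et x * et w * g y z
  - et x * et z * g y w - et y * et w * g x z.
Definition pi5 : tensor4 := fun x y z w =>
  et y * et z * g x (ph w) + et x * et w * g y (ph z)
  - et x * et z * g y (ph w) - et y * et w * g x (ph z).

Definition L1 : tensor4 := fun x y z w => pi1 x y z w - pi2 x y z w - pi4 x y z w.
Definition L2 : tensor4 := fun x y z w => pi3 x y z w + pi5 x y z w.
End Pis.

(* 2-planes alpha = span(x, y) with x, y linearly independent *)
Definition lin_indep2 (x y : V) : Prop :=
  forall a b : R, a *: x + b *: y = 0 -> a = 0 /\ b = 0.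
Definition in_plane (x y u : V) : Prop := exists a b : R, u = a *: x + b *: y.

Definition plane_nondegenerate (G : 'M[R]_5) (x y : V) : Prop :=
  forall u, in_plane x y u -> (forall v, in_plane x y v -> gf G u v = 0) -> u = 0.
Definition plane_totally_real (phi G : 'M[R]_5) (x y : V) : Prop :=
  forall u v, in_plane x y u -> in_plane x y v -> gf G u (phi *m v) = 0.
Definition plane_orth_xi (G : 'M[R]_5) (xi : V) (x y : V) : Prop :=
  forall u, in_plane x y u -> gf G u xi = 0.

Definition admissible_basis (phi : 'M[R]_5) (xi : V) (G : 'M[R]_5) (x y : V)
  : Prop :=
  [/\ lin_indep2 x y, plane_nondegenerate G x y,
      plane_totally_real phi G x y & plane_orth_xi G xi x y].

Definition sec_k (G : 'M[R]_5) (L : tensor4) (x y : V) : R :=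
  L x y y x / pi1 G x y y x.
Definition sec_kstar (phi G : 'M[R]_5) (L : tensor4) (x y : V) : R :=
  L x y y (phi *m x) / pi1 G x y y x.

End ACB.

From HB Require Import structures.
From mathcomp Require Import all_boot all_order all_algebra.
From mathcomp Require Import ring lra.
From Stdlib Require Import Classical.
Set Implicit Arguments. Unset Strict Implicit. Unset Printing Implicit Defensive.
Import Order.TTheory GRing.Theory Num.Theory.
Local Open Scope ring_scope.

(* On ker eta, phi is a complex structure and g is a form of signature (2, 2)
   with g(phi x, phi y) = - g(x, y).  An anisotropic vector always exists
   orthogonally to fewer than five pairwise orthogonal anisotropic vectors
   (the orthogonal projector onto their complement has nonzero trace), and a
   rotation inside span(u, phi u) makes it totally real; this yields e1, e2 such
   that (e1, e2, phi e1, phi e2, xi) is an orthogonal basis spanning a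
   non-degenerate totally real plane.  For a phi-Kaehler-type tensor T each
   T(x, y, -, -) is a phi-anti-invariant 2-form, and such forms are determined
   by their values at (e1, e2) and (e1, phi e2); with the pair symmetry of T,
   T is determined by T(e1, e2, e2, e1) and T(e1, e2, e2, phi e1).  Since L1 and
   L2 are of phi-Kaehler type and take the values (pi1, 0) and (0, pi1) on every
   totally real plane orthogonal to xi, L = nu L1 + nu* L2 and the sectional
   curvatures k and k* are nu and nu* on all such planes. *)

Section BilinearForm.
Variables (R : rcfType) (G : 'M[R]_5).
Local Notation V := 'cV[R]_5.
Local Notation g := (gf G).

Lemma gfDl (x y z : V) : g (x + y) z = g x z + g y z.
Proof. by rewrite /gf linearD /= !mulmxDl mxE. Qed.
Lemma gfDr (x y z : V) : g z (x + y) = g z x + g z y.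
Proof. by rewrite /gf !mulmxDr mxE. Qed.
Lemma gfZl (a : R) (x z : V) : g (a *: x) z = a * g x z.
Proof. by rewrite /gf linearZ /= -!scalemxAl mxE. Qed.
Lemma gfZr (a : R) (x z : V) : g z (a *: x) = a * g z x.
Proof. by rewrite /gf -!scalemxAr mxE. Qed.
Lemma gfNr (x z : V) : g z (- x) = - g z x.
Proof. by rewrite -scaleN1r gfZr mulN1r. Qed.
Lemma gf0r (z : V) : g z 0 = 0.
Proof. by rewrite -(scale0r (0 : V)) gfZr mul0r. Qed.

Lemma gf_sumr k (c : 'I_k -> R) (s : 'I_k -> V) (x : V) :
  g x (\sum_i c i *: s i) = \sum_i c i * g x (s i).
Proof.
rewrite /gf mulmx_sumr summxE; apply: eq_bigr => i _.
by rewrite -scalemxAr mxE.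
Qed.

Lemma signature_2_3_unitmx : signature_2_3 G -> G \in unitmx.
Proof.
case=> P [_ PGP]; have : P^T *m G *m P \in unitmx.
  rewrite PGP unitmxE det_diag unitfE; apply/prodf_neq0 => i _.
  by rewrite mxE; case: ifP => _; rewrite ?oppr_eq0 oner_eq0.
by rewrite !unitmx_mul => /andP[/andP[_ ->] _].
Qed.

Hypothesis G_sym : G^T = G.
Hypothesis G_unit : G \in unitmx.

Lemma gf_sym (x y : V) : g x y = g y x.
Proof.
rewrite /gf -[in RHS]G_sym.
have -> : y^T *m G^T *m x = (x^T *m G *m y)^T by rewrite !trmx_mul trmxK mulmxA.
by rewrite [in RHS]mxE.
Qed.

Lemma gf_nondegenerate (a : V) : (forall w, g a w = 0) -> a = 0.
Proof.
move=> a_perp; have aG0 : a^T *m G = 0.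
  by apply/rowP => j; have := a_perp (delta_mx j 0); rewrite /gf -colE !mxE.
have : a^T = 0 by rewrite -(mulmxK G_unit a^T) aG0 mul0mx.
by move/(congr1 trmx); rewrite trmxK trmx0.
Qed.

Lemma isotropic_orthoprojector_eq0 (Y : 'M[R]_5) :
    (forall v w, g (Y *m v) (w - Y *m w) = 0) ->
  (forall v, g (Y *m v) (Y *m v) = 0) -> Y = 0.
Proof.
move=> Y_orth Y_iso.
have Y_polar v w : g (Y *m v) (Y *m w) = 0.
  have := Y_iso (v + w); rewrite mulmxDr gfDl !gfDr !Y_iso (gf_sym (Y *m w)).
  lra.
have Yv0 (v : V) : Y *m v = 0.
  apply: gf_nondegenerate => w.
  by rewrite -(subrK (Y *m w) w) gfDr Y_orth Y_polar addr0.
apply/matrixP => i j; have := Yv0 (delta_mx j 0).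
by rewrite -colE => /colP/(_ i); rewrite !mxE.
Qed.

Section OrthogonalFamily.
Variables (k : nat) (s : 'I_k -> V).
Hypothesis s_orth : forall i j, i != j -> g (s i) (s j) = 0.
Hypothesis s_aniso : forall i, g (s i) (s i) != 0.

Definition frame_proj (v : V) : V := \sum_i (g (s i) v / g (s i) (s i)) *: s i.

Definition frame_projmx : 'M[R]_5 :=
  \sum_i (g (s i) (s i))^-1 *: (s i *m ((s i)^T *m G)).

Lemma mul_frame_projmx (v : V) : frame_projmx *m v = frame_proj v.
Proof.
rewrite /frame_projmx mulmx_suml; apply: eq_bigr => i _.
rewrite -scalemxAl -mulmxA [(s i)^T *m G *m v]mx11_scalar mul_mx_scalar.
by rewrite scalerA mulrC.
Qed.

Lemma mxtrace_frame_projmx : \tr frame_projmx = k%:R.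
Proof.
rewrite /frame_projmx raddf_sum /= -[k in RHS]card_ord -sumr_const.
apply: eq_bigr => i _.
by rewrite mxtraceZ mxtrace_mulC /mxtrace big_ord1 mulVf.
Qed.

Lemma gf_frame_proj (j : 'I_k) (v : V) : g (s j) (frame_proj v) = g (s j) v.
Proof.
rewrite gf_sumr (bigD1 j) //= big1 ?addr0 => [|i ij]; first by rewrite divfK.
by rewrite [g (s j) (s i)]s_orth ?mulr0 // eq_sym.
Qed.

Lemma gf_frame_proj_perp (j : 'I_k) (v : V) : g (s j) (v - frame_proj v) = 0.
Proof. by rewrite gfDr gfNr gf_frame_proj subrr. Qed.

Lemma exists_anisotropic_orthogonal : (k < 5)%N ->
  exists u : V, g u u != 0 /\ forall i, g (s i) u = 0.
Proof.
move=> k_lt5; pose Y := 1%:M - frame_projmx.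
have YE v : Y *m v = v - frame_proj v by rewrite mulmxBl mul1mx mul_frame_projmx.
have Y_perp i v : g (Y *m v) (s i) = 0 by rewrite gf_sym YE gf_frame_proj_perp.
have [[v Yv_aniso] | no_aniso] := classic (exists v, g (Y *m v) (Y *m v) != 0).
  by exists (Y *m v); split=> // i; rewrite gf_sym Y_perp.
have Y0 : Y = 0.
  apply: isotropic_orthoprojector_eq0 => [v w|v].
    rewrite [Y *m w]YE opprB addrC subrK gf_sumr big1 // => i _.
    by rewrite Y_perp mulr0.
  by apply/eqP; apply/negPn/negP => Yv_aniso; apply: no_aniso; exists v.
have := congr1 mxtrace Y0; rewrite mxtrace0 raddfB /= mxtrace1.
rewrite mxtrace_frame_projmx -natrB 1?ltnW // => /eqP.
by rewrite pnatr_eq0 subn_eq0 leqNgt k_lt5.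
Qed.

End OrthogonalFamily.

Lemma orthogonal_frame_expansion (s : 'I_5 -> V) :
    (forall i j, i != j -> g (s i) (s j) = 0) -> (forall i, g (s i) (s i) != 0) ->
  forall v, frame_proj s v = v.
Proof.
move=> s_orth s_aniso v; apply/eqP; rewrite eq_sym -subr_eq0; apply/eqP.
set w := v - _; have w_perp j : g (s j) w = 0 by exact: gf_frame_proj_perp.
pose E : 'M[R]_5 := \matrix_(i, j) s j i 0.
have EGE u : E^T *m G *m u = \col_j g (s j) u.
  apply/colP => j; rewrite !mxE /gf mxE; apply: eq_bigr => l _.
  by congr (_ * _); rewrite !mxE; apply: eq_bigr => m _; rewrite !mxE.
have EGE_diag : E^T *m G *m E = diag_mx (\row_j g (s j) (s j)).
  apply/matrixP => i j; transitivity ((E^T *m G *m s j) i 0).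
    by rewrite !mxE; apply: eq_bigr => l _; rewrite [E l j]mxE.
  rewrite EGE !mxE; have [->|ij] := eqVneq i j; first by rewrite mulr1n.
  by rewrite s_orth ?mulr0n.
have EG_unit : E^T *m G \in unitmx.
  have : E^T *m G *m E \in unitmx.
    by rewrite EGE_diag unitmxE det_diag unitfE; apply/prodf_neq0 => i _; rewrite mxE.
  by rewrite unitmx_mul => /andP[].
have EGw0 : E^T *m G *m w = 0 by rewrite EGE; apply/colP => j; rewrite !mxE w_perp.
by have := congr1 (mulmx (invmx (E^T *m G))) EGw0; rewrite mulKmx // mulmx0.
Qed.

Lemma linear_frame_eq0 (s : 'I_5 -> V) (F : V -> R) :
    (forall i j, i != j -> g (s i) (s j) = 0) -> (forall i, g (s i) (s i) != 0) ->
    (forall (a : R) x y, F (a *: x + y) = a * F x + F y) ->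
  (forall j, F (s j) = 0) -> forall v, F v = 0.
Proof.
move=> s_orth s_aniso F_lin F_s v.
have F0 : F 0 = 0 by have := F_lin 1 0 0; rewrite scale1r addr0 mul1r; lra.
rewrite -(orthogonal_frame_expansion s_orth s_aniso v).
apply: (big_ind (fun u => F u = 0)) => // [x y Fx Fy|j _].
  by have := F_lin 1 x y; rewrite scale1r mul1r Fx Fy addr0.
have := F_lin (g (s j) v / g (s j) (s j)) (s j) 0.
by rewrite !addr0 F_s F0 mulr0 addr0.
Qed.

Lemma pi1_neq0 (x y : V) : lin_indep2 x y -> plane_nondegenerate G x y ->
  pi1 G x y y x != 0.
Proof.
move=> xy_indep xy_nondeg; apply/eqP; rewrite /pi1 (gf_sym y x) => pi1_eq0.
(* a kernel vector of the singular Gram matrix of (x, y) *)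
have [a [b [ab_neq0 ux uy]]] : exists a b : R, [/\ (a != 0) || (b != 0),
    g (a *: x + b *: y) x = 0 & g (a *: x + b *: y) y = 0].
  have [/andP[/eqP xx0 /eqP xy0] | xxy_neq0] := boolP ((g x x == 0) && (g x y == 0)).
    exists 1, 0; rewrite oner_eq0 !(gfDl, gfZl) xx0 (gf_sym y x) xy0.
    by split=> //; ring.
  exists (g x y), (- g x x); split.
  - by move: xxy_neq0; rewrite negb_and oppr_eq0 orbC.
  - by rewrite !(gfDl, gfZl) (gf_sym y x); ring.
  - by rewrite !(gfDl, gfZl); lra.
have u0 : a *: x + b *: y = 0.
  apply: xy_nondeg; first by exists a, b.
  by move=> v [c [d ->]]; rewrite !(gfDr, gfZr) ux uy; ring.
have [a0 b0] := xy_indep a b u0.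
by move: ab_neq0; rewrite a0 b0 eqxx.
Qed.

End BilinearForm.

Section CurvatureLikeTensors.
Variable R : rcfType.
Implicit Type T : tensor4 R.

Lemma curvature_like_pair_sym T : curvature_like T ->
  forall x y z w, T x y z w = T z w x y.
Proof.
case=> _ anti12 anti34 bianchi x y z w.
(* the sum of the Bianchi identities at the four cyclic shifts of (x, y, z, w) *)
have := bianchi x y z w; have := bianchi y z w x.
have := bianchi z w x y; have := bianchi w x y z.
rewrite (anti34 y z w x) (anti12 w y z x) (anti34 y w z x) (anti34 w x z y).
rewrite (anti12 x z w y) (anti34 z x w y) (anti34 x y w z) (anti34 z w y x).
lra.
Qed.

Lemma phi_Kaehler_type_lincomb (phi : 'M[R]_5) (a b : R) T1 T2 :
  phi_Kaehler_type phi T1 -> phi_Kaehler_type phi T2 ->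
  phi_Kaehler_type phi (fun x y z w => a * T1 x y z w + b * T2 x y z w).
Proof.
case=> [[[l1 l2 l3 l4] a12 a34 b1] k1] [[[m1 m2 m3 m4] c12 c34 b2] k2].
split; first split; first split=> *.
- by rewrite l1 m1; ring.
- by rewrite l2 m2; ring.
- by rewrite l3 m3; ring.
- by rewrite l4 m4; ring.
- by move=> *; rewrite a12 c12; ring.
- by move=> *; rewrite a34 c34; ring.
- move=> x y z w; transitivity (a * (T1 x y z w + T1 y z x w + T1 z x y w)
    + b * (T2 x y z w + T2 y z x w + T2 z x y w)); first ring.
  by rewrite b1 b2 !mulr0 addr0.
- by move=> *; rewrite k1 k2; ring.
Qed.

End CurvatureLikeTensors.

Lemma exists_sqrt_sum_sqr (R : rcfType) (a b : R) : a != 0 ->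
  exists s : R, s ^+ 2 = a ^+ 2 + b ^+ 2 /\ a + s != 0.
Proof.
move=> a_neq0; have sqrt_ge0 := sqrtr_ge0 (a ^+ 2 + b ^+ 2).
have sqr_sqrt : Num.sqrt (a ^+ 2 + b ^+ 2) ^+ 2 = a ^+ 2 + b ^+ 2.
  by rewrite sqr_sqrtr // addr_ge0 // sqr_ge0.
have [a_gt0 | a_le0] := ltrP 0 a.
  by exists (Num.sqrt (a ^+ 2 + b ^+ 2)); split=> //; apply/eqP; lra.
have a_lt0 : a < 0 by rewrite lt_neqAle a_neq0 a_le0.
by exists (- Num.sqrt (a ^+ 2 + b ^+ 2)); rewrite sqrrN; split=> //; apply/eqP; lra.
Qed.

Section AlmostContactBMetric.
Variables (R : rcfType) (phi G : 'M[R]_5) (xi : 'cV[R]_5) (eta : 'rV[R]_5).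
Local Notation V := 'cV[R]_5.
Local Notation g := (gf G).
Local Notation et := (etaf eta).

Lemma etafD (x y : V) : et (x + y) = et x + et y.
Proof. by rewrite /etaf mulmxDr mxE. Qed.
Lemma etafZ (a : R) (x : V) : et (a *: x) = a * et x.
Proof. by rewrite /etaf -scalemxAr mxE. Qed.

Hypothesis acB : acBmetric phi xi eta G.

Lemma acBmetric_unitmx : G \in unitmx.
Proof. by case: acB => _ /signature_2_3_unitmx. Qed.

Let G_sym : G^T = G.
Proof. by case: acB. Qed.

Let gfC : forall x y : V, g x y = g y x := gf_sym G_sym.

Lemma phi_xi : phi *m xi = 0.
Proof. by case: acB => _ _ []. Qed.

Lemma etaf_gf (x : V) : et x = g x xi.
Proof.
case: acB => _ _ [phi_xi _] [_ eta_xi] B_metric.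
by rewrite B_metric phi_xi gf0r oppr0 add0r eta_xi mulr1.
Qed.

Lemma gf_xi_xi : g xi xi = 1.
Proof. by rewrite -etaf_gf; case: acB => _ _ _ []. Qed.

Lemma etaf_phi (x : V) : et (phi *m x) = 0.
Proof.
by case: acB => _ _ _ [eta_phi _] _; rewrite /etaf mulmxA eta_phi mul0mx mxE.
Qed.

Lemma phi_phiE (x : V) : phi *m (phi *m x) = - x + et x *: xi.
Proof.
case: acB => _ _ [_ phi2] _ _.
rewrite mulmxA phi2 mulmxDl mulNmx mul1mx -mulmxA.
by rewrite [eta *m x]mx11_scalar mul_mx_scalar.
Qed.

Lemma gf_phi_phi (x y : V) : g (phi *m x) (phi *m y) = - g x y + et x * et y.
Proof. by case: acB => _ _ _ _ B_metric; rewrite [g x y]B_metric; ring. Qed.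

Lemma gf_phi_swap (x y : V) : g x (phi *m y) = g (phi *m x) y.
Proof.
case: acB => _ _ _ _ B_metric.
rewrite B_metric phi_phiE etaf_phi mulr0 addr0 gfDr gfNr gfZr -etaf_gf etaf_phi.
by rewrite mulr0 addr0 opprK.
Qed.

Lemma gf_phi_sym (x y : V) : g x (phi *m y) = g y (phi *m x).
Proof. by rewrite gf_phi_swap gfC. Qed.

Lemma exists_totally_real_in_phi_span (u : V) : et u = 0 -> g u u != 0 ->
  exists a b : R,
    g (a *: u + b *: (phi *m u)) (phi *m (a *: u + b *: (phi *m u))) = 0 /\
    g (a *: u + b *: (phi *m u)) (a *: u + b *: (phi *m u)) != 0.
Proof.
move=> u_eta u_aniso.
have [s [s2 as_neq0]] := exists_sqrt_sum_sqr (g u (phi *m u)) u_aniso.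
set a := g u u in u_aniso s2 as_neq0 *; set b := g u (phi *m u) in s2 *.
(* for x = al u + be phi u, g(x, phi x) = b (al^2 - be^2) - 2 a al be,
   which vanishes at (al, be) = (a + s, b) *)
exists (a + s), b.
rewrite mulmxDr -!scalemxAr phi_phiE u_eta scale0r addr0.
rewrite !(gfDl, gfDr, gfZl, gfZr, gfNr) gf_phi_phi u_eta mulr0 addr0.
rewrite (gfC (phi *m u) u) -/a -/b; split.
  transitivity (b * (s ^+ 2 - (a ^+ 2 + b ^+ 2))); first ring.
  by rewrite s2 subrr mulr0.
have sum_sqr_gt0 : 0 < a ^+ 2 + b ^+ 2.
  by rewrite ltr_wpDr ?sqr_ge0 // exprn_even_gt0.
have -> : (a + s) * ((a + s) * a + b * b) + b * ((a + s) * b + b * - a)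
    = 2 * (a ^+ 2 + b ^+ 2) * (a + s) + a * (s ^+ 2 - (a ^+ 2 + b ^+ 2)) by ring.
by rewrite s2 subrr mulr0 addr0 !mulf_neq0 // gt_eqF.
Qed.

Record adapted_pair (e1 e2 : V) : Prop := AdaptedPair {
  adapted_eta1 : et e1 = 0;
  adapted_eta2 : et e2 = 0;
  adapted_aniso1 : g e1 e1 != 0;
  adapted_aniso2 : g e2 e2 != 0;
  adapted_orth : g e1 e2 = 0;
  adapted_real1 : g e1 (phi *m e1) = 0;
  adapted_real2 : g e2 (phi *m e2) = 0;
  adapted_real12 : g e1 (phi *m e2) = 0 }.

Lemma adapted_pair_admissible e1 e2 :
  adapted_pair e1 e2 -> admissible_basis phi xi G e1 e2.
Proof.
case=> e1_eta e2_eta e1_aniso e2_aniso o12 r1 r2 r12; split.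
- move=> a b ab0.
  have := congr1 (g e1) ab0; rewrite !(gfDr, gfZr) o12 gf0r mulr0 addr0.
  have := congr1 (g e2) ab0; rewrite !(gfDr, gfZr) gf0r gfC o12 mulr0 add0r.
  move=> /eqP; rewrite mulf_eq0 (negbTE e2_aniso) orbF => /eqP ->.
  by move=> /eqP; rewrite mulf_eq0 (negbTE e1_aniso) orbF => /eqP ->.
- move=> u [a [b ->]] u_perp.
  have e1_in : in_plane e1 e2 e1 by exists 1, 0; rewrite scale1r scale0r addr0.
  have e2_in : in_plane e1 e2 e2 by exists 0, 1; rewrite scale1r scale0r add0r.
  have := u_perp e1 e1_in; have := u_perp e2 e2_in.
  rewrite !(gfDl, gfZl) o12 gfC o12 !mulr0 addr0 add0r.
  move=> /eqP; rewrite mulf_eq0 (negbTE e2_aniso) orbF => /eqP ->.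
  move=> /eqP; rewrite mulf_eq0 (negbTE e1_aniso) orbF => /eqP ->.
  by rewrite !scale0r addr0.
- move=> u v [a [b ->]] [c [d ->]].
  rewrite mulmxDr -!scalemxAr !(gfDl, gfDr, gfZl, gfZr) r1 r2 r12 gf_phi_sym r12.
  by ring.
- by move=> u [a [b ->]]; rewrite !(gfDl, gfZl) -!etaf_gf e1_eta e2_eta !mulr0 addr0.
Qed.

Lemma exists_adapted_pair : exists e1 e2, adapted_pair e1 e2.
Proof.
have G_unit := acBmetric_unitmx.
have [u [u_aniso u_perp]] : exists u, g u u != 0 /\ forall i : 'I_1, g xi u = 0.
  apply: (exists_anisotropic_orthogonal G_sym G_unit) => // [i j|i].
    by rewrite !ord1.
  by rewrite gf_xi_xi oner_eq0.
have u_eta : et u = 0 by rewrite etaf_gf gfC (u_perp ord0).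
have [a [b [x_real x_aniso]]] := exists_totally_real_in_phi_span u_eta u_aniso.
set x := a *: u + b *: (phi *m u) in x_real x_aniso.
have x_eta : et x = 0 by rewrite etafD !etafZ u_eta etaf_phi !mulr0 addr0.
pose s3 (i : 'I_3) := nth 0 [:: xi; x; phi *m x] i.
have s3_orth i j : i != j -> g (s3 i) (s3 j) = 0.
  rewrite /s3; move: i j => [[|[|[|i]]] ?] [[|[|[|j]]] ?] //= _.
  all: rewrite ?(gfC xi) -?etaf_gf ?etaf_phi ?x_eta ?x_real //.
  by rewrite gfC.
have s3_aniso i : g (s3 i) (s3 i) != 0.
  rewrite /s3; move: i => [[|[|[|i]]] ?] //=; rewrite ?gf_xi_xi ?oner_eq0 //.
  by rewrite gf_phi_phi x_eta mulr0 addr0 oppr_eq0.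
have [//|v [v_aniso v_perp]] :=
  exists_anisotropic_orthogonal G_sym G_unit s3_orth s3_aniso.
have v_eta : et v = 0 by rewrite etaf_gf gfC (v_perp ord0).
have [c [d [y_real y_aniso]]] := exists_totally_real_in_phi_span v_eta v_aniso.
have xv : g x v = 0 := v_perp (Ordinal (isT : (1 < 3)%N)).
have phixv : g (phi *m x) v = 0 := v_perp (Ordinal (isT : (2 < 3)%N)).
exists x, (c *: v + d *: (phi *m v)); split=> //.
- by rewrite etafD !etafZ v_eta etaf_phi !mulr0 addr0.
- by rewrite !(gfDr, gfZr) xv gf_phi_swap phixv !mulr0 addr0.
- rewrite mulmxDr -!scalemxAr phi_phiE v_eta scale0r addr0.
  by rewrite !(gfDr, gfZr, gfNr) gf_phi_swap phixv xv oppr0 !mulr0 addr0.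
Qed.

Definition adapted_frame (e1 e2 : V) (i : 'I_5) : V :=
  nth 0 [:: e1; e2; phi *m e1; phi *m e2; xi] i.

Definition phi_anti_form (omega : V -> V -> R) : Prop :=
  [/\ forall (a : R) x x' w, omega (a *: x + x') w = a * omega x w + omega x' w,
      forall z w, omega z w = - omega w z
    & forall z w, omega (phi *m z) (phi *m w) = - omega z w].

Lemma phi_Kaehler_anti_form (T : tensor4 R) x y :
  phi_Kaehler_type phi T -> phi_anti_form (T x y).
Proof. by case=> [[[_ _ T_lin3 _] _ anti34 _] T_phi]; split=> *; rewrite ?T_lin3. Qed.

Section PhiAntiForm.
Variable omega : V -> V -> R.
Hypothesis omega_form : phi_anti_form omega.

Let omega_linl := let: And3 linl _ _ := omega_form in linl.
Let omega_anti := let: And3 _ anti _ := omega_form in anti.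
Let omega_phi := let: And3 _ _ phi_inv := omega_form in phi_inv.

Let omega0l w : omega 0 w = 0.
Proof. by have := omega_linl 1 0 0 w; rewrite scale1r addr0 mul1r; lra. Qed.

Let omegaNl z w : omega (- z) w = - omega z w.
Proof.
by have := omega_linl (-1) z 0 w; rewrite scaleN1r addr0 omega0l addr0 mulN1r.
Qed.

Lemma form_xil w : omega xi w = 0.
Proof. by have := omega_phi xi w; rewrite phi_xi omega0l; lra. Qed.

Lemma form_xir w : omega w xi = 0.
Proof. by rewrite omega_anti form_xil oppr0. Qed.

Lemma form_phi_swap z w : et z = 0 -> omega (phi *m z) w = omega z (phi *m w).
Proof.
move=> z_eta; have := omega_phi (phi *m z) w.
by rewrite phi_phiE z_eta scale0r addr0 omegaNl; lra.
Qed.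

Lemma form_phi_diag z : et z = 0 -> omega z (phi *m z) = 0.
Proof. by move=> z_eta; have := form_phi_swap z z_eta; rewrite omega_anti; lra. Qed.

Lemma form_adapted_frame_eq0 e1 e2 : et e1 = 0 -> et e2 = 0 ->
    omega e1 e2 = 0 -> omega e1 (phi *m e2) = 0 ->
  forall i j, omega (adapted_frame e1 e2 i) (adapted_frame e1 e2 j) = 0.
Proof.
move=> e1_eta e2_eta o12 o1J2.
have oJ12 : omega (phi *m e1) e2 = 0 by rewrite form_phi_swap.
have oJJ : omega (phi *m e1) (phi *m e2) = 0 by rewrite omega_phi o12 oppr0.
have o1J1 := form_phi_diag e1_eta; have o2J2 := form_phi_diag e2_eta.
have odiag z : omega z z = 0 by have := omega_anti z z; lra.
move=> [[|[|[|[|[|i]]]]] ?] [[|[|[|[|[|j]]]]] ?] //=.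
all: rewrite ?form_xil ?form_xir ?odiag ?o12 ?o1J2 ?oJ12 ?oJJ ?o1J1 ?o2J2 //.
all: by rewrite omega_anti ?o12 ?o1J2 ?oJ12 ?oJJ ?o1J1 ?o2J2 oppr0.
Qed.

End PhiAntiForm.

Local Notation l1 := (L1 phi eta G).
Local Notation l2 := (L2 phi eta G).

Ltac gf_normalize x y z w := rewrite ?(gfC y x) ?(gfC z x) ?(gfC w x) ?(gfC z y)
  ?(gfC w y) ?(gfC w z) ?(gf_phi_sym y x) ?(gf_phi_sym z x) ?(gf_phi_sym w x)
  ?(gf_phi_sym z y) ?(gf_phi_sym w y) ?(gf_phi_sym w z).

Lemma L1_phi_Kaehler : phi_Kaehler_type phi l1.
Proof.
rewrite /L1 /pi1 /pi2 /pi4; split; first split.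
- split=> *;
    by rewrite ?mulmxDr -?scalemxAr !(gfDl, gfDr, gfZl, gfZr, etafD, etafZ); ring.
- by move=> *; ring.
- by move=> *; ring.
- by move=> x y z w; gf_normalize x y z w; ring.
- move=> x y z w; rewrite !phi_phiE !etaf_phi !(gfDr, gfNr, gfZr) -!etaf_gf.
  by gf_normalize x y z w; ring.
Qed.

Lemma L2_phi_Kaehler : phi_Kaehler_type phi l2.
Proof.
rewrite /L2 /pi3 /pi5; split; first split.
- split=> *;
    by rewrite ?mulmxDr -?scalemxAr !(gfDl, gfDr, gfZl, gfZr, etafD, etafZ); ring.
- by move=> *; ring.
- by move=> *; ring.
- by move=> x y z w; gf_normalize x y z w; ring.
- move=> x y z w; rewrite !phi_phiE !etaf_phi !(gfDr, gfNr, gfZr) -!etaf_gf.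
  by gf_normalize x y z w; ring.
Qed.

Lemma L1_L2_totally_real (x y : V) : et x = 0 -> et y = 0 ->
    g x (phi *m x) = 0 -> g y (phi *m y) = 0 -> g x (phi *m y) = 0 ->
  [/\ l1 x y y x = pi1 G x y y x, l2 x y y x = 0,
      l1 x y y (phi *m x) = 0 & l2 x y y (phi *m x) = pi1 G x y y x].
Proof.
move=> x_eta y_eta x_real y_real xy_real.
have yx_real : g y (phi *m x) = 0 by rewrite gf_phi_sym.
rewrite /L1 /L2 /pi1 /pi2 /pi3 /pi4 /pi5 !phi_phiE x_eta y_eta !etaf_phi.
rewrite x_real y_real xy_real yx_real.
by split; rewrite ?(gfDr, gfNr, gfZr) -?etaf_gf ?x_eta ?y_eta; ring.
Qed.

Section AdaptedFrame.
Variables e1 e2 : V.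
Hypothesis e12 : adapted_pair e1 e2.
Local Notation f := (adapted_frame e1 e2).

Lemma adapted_frame_orth i j : i != j -> g (f i) (f j) = 0.
Proof.
case: e12 => e1_eta e2_eta _ _ o12 r1 r2 r12.
rewrite neq_ltn => /orP[] ij; last rewrite gfC.
all: move: i j ij => [[|[|[|[|[|i]]]]] ?] [[|[|[|[|[|j]]]]] ?] //= _.
all: rewrite ?gf_phi_phi -?etaf_gf ?etaf_phi ?e1_eta ?e2_eta ?mulr0 ?addr0 ?o12 //.
all: by rewrite ?oppr0 // gf_phi_sym.
Qed.

Lemma adapted_frame_aniso i : g (f i) (f i) != 0.
Proof.
case: e12 => e1_eta e2_eta e1_aniso e2_aniso _ _ _ _.
move: i => [[|[|[|[|[|i]]]]] ?] //=; rewrite ?gf_xi_xi ?oner_eq0 //.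
all: by rewrite gf_phi_phi ?e1_eta ?e2_eta mulr0 addr0 oppr_eq0.
Qed.

Variable T : tensor4 R.
Hypothesis T_Kaehler : phi_Kaehler_type phi T.

Lemma phi_Kaehler_adapted_frame_eq0 :
    T e1 e2 e2 e1 = 0 -> T e1 e2 e2 (phi *m e1) = 0 ->
  forall i j k l, T (f i) (f j) (f k) (f l) = 0.
Proof.
case: T_Kaehler => [[_ _ anti34 bianchi] T_phi] T1 T2.
have T_sym := curvature_like_pair_sym (proj1 T_Kaehler).
have [e1_eta e2_eta _ _ _ _ _ _] := e12.
have T_form x y := phi_Kaehler_anti_form x y T_Kaehler.
have T_frame x y := form_adapted_frame_eq0 (T_form x y).
have T_form_swap x y := form_phi_swap (T_form x y).
have T_form_diag x y := form_phi_diag (T_form x y).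
have A1 : T e1 e2 e1 e2 = 0 by rewrite anti34 T1 oppr0.
have A2 : T e1 e2 e1 (phi *m e2) = 0 by rewrite anti34 T_form_swap // T2 oppr0.
have S1 := T_frame _ _ _ _ e1_eta e2_eta A1 A2.
have B1 : T e1 (phi *m e2) e1 e2 = 0 by rewrite T_sym A2.
have B2 : T e1 (phi *m e2) e1 (phi *m e2) = 0.
  have := bianchi e1 e2 (phi *m e1) (phi *m e2).
  rewrite T_phi A1 oppr0 add0r (T_sym (phi *m e1)) (anti34 e2 (phi *m e2)).
  rewrite T_form_diag // oppr0 addr0 T_sym -T_form_swap // anti34; lra.
have S2 := T_frame _ _ _ _ e1_eta e2_eta B1 B2.
move=> i j k l; rewrite T_sym; apply: T_frame => //; rewrite T_sym.
  exact: S1.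
exact: S2.
Qed.

Lemma phi_Kaehler_eq0 : T e1 e2 e2 e1 = 0 -> T e1 e2 e2 (phi *m e1) = 0 ->
  forall x y z w, T x y z w = 0.
Proof.
move=> T1 T2; have T_frame := phi_Kaehler_adapted_frame_eq0 T1 T2.
case: T_Kaehler => [[[T_lin1 T_lin2 T_lin3 T_lin4] _ _ _] _].
have lin_eq0 := linear_frame_eq0 adapted_frame_orth adapted_frame_aniso.
move=> x y z w; apply: (lin_eq0 (fun x => T x y z w)) => [a u u'|i].
  exact: T_lin1.
apply: (lin_eq0 (fun y => T (f i) y z w)) => [a u u'|j]; first exact: T_lin2.
apply: (lin_eq0 (fun z => T (f i) (f j) z w)) => [a u u'|k]; first exact: T_lin3.
apply: (lin_eq0 (fun w => T (f i) (f j) (f k) w)) => [a u u'|l]; first exact: T_lin4.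
exact: T_frame.
Qed.

End AdaptedFrame.

Lemma phi_Kaehler_decomposition e1 e2 (L : tensor4 R) :
    adapted_pair e1 e2 -> phi_Kaehler_type phi L ->
  forall x y z w, L x y z w =
    sec_k G L e1 e2 * l1 x y z w + sec_kstar phi G L e1 e2 * l2 x y z w.
Proof.
move=> e12 L_Kaehler.
set nu := sec_k G L e1 e2; set nustar := sec_kstar phi G L e1 e2.
have [e1_eta e2_eta e1_aniso e2_aniso o12 r1 r2 r12] := e12.
have pi1_e_neq0 : pi1 G e1 e2 e2 e1 != 0.
  by rewrite /pi1 o12 mul0r subr0 mulf_neq0.
have [l1_e l2_e l1_e' l2_e'] := L1_L2_totally_real e1_eta e2_eta r1 r2 r12.
pose T x y z w := 1 * L x y z w + (-1) * (nu * l1 x y z w + nustar * l2 x y z w).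
have T_Kaehler : phi_Kaehler_type phi T.
  apply: phi_Kaehler_type_lincomb => //.
  exact: phi_Kaehler_type_lincomb L1_phi_Kaehler L2_phi_Kaehler.
have T_eq0 : forall x y z w, T x y z w = 0.
  apply: (phi_Kaehler_eq0 e12 T_Kaehler); rewrite /T ?l1_e ?l2_e ?l1_e' ?l2_e'.
    by rewrite /nu /sec_k; field.
  by rewrite /nustar /sec_kstar; field.
by move=> x y z w; have := T_eq0 x y z w; rewrite /T; lra.
Qed.

Lemma admissible_sec_lincomb (nu nustar : R) x y :
    admissible_basis phi xi G x y ->
  let L x y z w := nu * l1 x y z w + nustar * l2 x y z w in
  sec_k G L x y = nu /\ sec_kstar phi G L x y = nustar.
Proof.
case=> xy_indep xy_nondeg xy_real xy_xi /=.
have x_in : in_plane x y x by exists 1, 0; rewrite scale1r scale0r addr0.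
have y_in : in_plane x y y by exists 0, 1; rewrite scale1r scale0r add0r.
have x_eta : et x = 0 by rewrite etaf_gf xy_xi.
have y_eta : et y = 0 by rewrite etaf_gf xy_xi.
have [l1_xy l2_xy l1_xy' l2_xy'] := L1_L2_totally_real x_eta y_eta
  (xy_real _ _ x_in x_in) (xy_real _ _ y_in y_in) (xy_real _ _ x_in y_in).
have pi1_xy_neq0 := pi1_neq0 G_sym xy_indep xy_nondeg.
by rewrite /sec_k /sec_kstar l1_xy l2_xy l1_xy' l2_xy'; split; field.
Qed.

End AlmostContactBMetric.

Theorem theorem3p3 (R : rcfType) (phi : 'M[R]_5) (xi : 'cV[R]_5)
    (eta : 'rV[R]_5) (G : 'M[R]_5) (L : tensor4 R) :
  acBmetric phi xi eta G ->
  phi_Kaehler_type phi L ->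
  exists nu nustar : R,
    [/\ (forall x y z w,
           L x y z w = nu * L1 phi eta G x y z w + nustar * L2 phi eta G x y z w),
        (exists x y, admissible_basis phi xi G x y)
      & (forall x y, admissible_basis phi xi G x y ->
           sec_k G L x y = nu /\ sec_kstar phi G L x y = nustar)].
Proof.
move=> acB L_Kaehler; have [e1 [e2 e12]] := exists_adapted_pair acB.
move: (phi_Kaehler_decomposition acB e12 L_Kaehler).
set nu := sec_k G L e1 e2; set nustar := sec_kstar phi G L e1 e2 => L_dec.
exists nu, nustar; split=> //.
  by exists e1, e2; exact: (adapted_pair_admissible acB e12).
move=> x y xy_adm; rewrite /sec_k /sec_kstar !L_dec.
exact: (admissible_sec_lincomb acB nu nustar xy_adm).
Qed.
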